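(* Fix an agent $i$ in an $N$-agent Markov game with finite state space $\mathcal S$ and finite action spaces, and fix the other agents' joint policy to be the demonstrator policy $\pi_E^{(-i)}$. Let $\lambda>0$ and let $\psi:\mathbb R^{\mathcal S\times\mathcal A^{(1)}\times\cdots\times\mathcal A^{(N)}}\to\overline{\mathbb R}$ be a closed proper convex function. Define $$\mathrm{RL}^{(i)}(r^{(i)})=\arg\max_{\pi^{(i)}}\ \lambda H(\pi^{(i)})+\mathbb E_{\pi^{(i)},\pi_E^{(-i)}}[r^{(i)}(s,a^{(i)},a^{(-i)})],$$ $$\mathrm{IRL}^{(i)}_\psi(\pi_E^{(i)})=\arg\max_{r^{(i)}}\ -\psi(r^{(i)})-\max_{\pi^{(i)}}\big(\lambda H(\pi^{(i)})+\mathbb E_{\pi^{(i)},\pi_E^{(-i)}}[r^{(i)}]\big)+\mathbb E_{\pi_E}[r^{(i)}],$$ and assume the optimizers involved are unique. Then the policy obtained by running $\mathrm{RL}^{(i)}$ on the reward recovered by $\mathrm{IRL}^{(i)}_\psi$ satisfies $$\mathrm{RL}^{(i)}\circ\mathrm{IRL}^{(i)}_\psi(\pi_E^{(i)})=\arg\min_{\pi^{(i)}}\ -\lambda H(\pi^{(i)})+\psi^*\big(\rho_{\pi^{(i)},\pi_E^{(-i)}}-\rho_{\pi_E}\big),$$ i.e. this IRL problem is the dual of an occupancy-measure matching problem with regularizer $\psi$, and the induced policy is its primal optimum.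
   Context: A Markov game with $N$ agents is $\langle N,\mathcal S,\mathcal A^{(1)},\dots,\mathcal A^{(N)},P,r^{(1)},\dots,r^{(N)},\rho_0,\gamma\rangle$ with transition kernel $P$, initial-state distribution $\rho_0$, discount $\gamma\in[0,1)$, and rewards $r^{(i)}:\mathcal S\times\mathcal A^{(1)}\times\cdots\times\mathcal A^{(N)}\to\mathbb R$. Agent $i$ has policy $\pi^{(i)}(a^{(i)}\mid s)$; $-i$ denotes all agents other than $i$; $\pi=(\pi^{(i)},\pi^{(-i)})$ is the joint policy, and $\pi_E=(\pi_E^{(i)},\pi_E^{(-i)})$ is the demonstrators' joint policy. For any $f$, $\mathbb E_{\pi}[f(s,a)]=\mathbb E[\sum_{t\ge0}\gamma^t f(s_t,a_t)]$ with $s_0\sim\rho_0$, $a_t\sim\pi(\cdot\mid s_t)$, $s_{t+1}\sim P(\cdot\mid s_t,a_t)$. $H(\pi^{(i)})$ is the $\gamma$-discounted causal entropy $\mathbb E_{\pi}[-\log\pi^{(i)}(a^{(i)}\mid s)]$. The occupancy measure of a joint policy $\pi$ is $\rho_\pi(s,a)=\pi(a\mid s)\sum_{t\ge0}\gamma^tP(s_t=s\mid\pi)$, and $\rho_{\pi^{(i)},\pi^{(-i)}}$ denotes $\rho_\pi$ for $\pi=(\pi^{(i)},\pi^{(-i)})$. The conjugate is taken with the sign convention adapted to rewards: $\psi^*(x)=\sup_{r}\big(-\langle x,r\rangle-\psi(r)\big)$, where $\langle x,r\rangle=\sum_{s,a}x(s,a)r(s,a)$. *)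

From HB Require Import structures.
From mathcomp Require Import all_boot.
From Stdlib Require Import Reals ClassicalEpsilon.
Set Implicit Arguments. Unset Strict Implicit. Unset Printing Implicit Defensive.
Open Scope R_scope.

Definition fsum (T : finType) (f : T -> R) : R := \big[Rplus/R0]_(x : T) f x.

Definition series (u : nat -> R) : R :=
  epsilon (inhabits R0) (fun l => Un_cv (fun n => sum_f_R0 u n) l).

Inductive Rbar := Fin (x : R) | PInf | NInf.

Definition Rbar_le (x y : Rbar) : Prop :=
  match x, y with
  | NInf, _ => True
  | _, PInf => True
  | Fin a, Fin b => a <= b
  | _, _ => False
  end.

Definition Rbar_opp (x : Rbar) : Rbar :=
  match x with Fin a => Fin (- a) | PInf => NInf | NInf => PInf end.

(* convention: (+oo) + (-oo) = -oo  (never used in non-degenerate cases) *)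
Definition Rbar_plus (x y : Rbar) : Rbar :=
  match x, y with
  | Fin a, Fin b => Fin (a + b)
  | NInf, _ | _, NInf => NInf
  | _, _ => PInf
  end.

Definition is_lub_Rbar (E : Rbar -> Prop) (l : Rbar) : Prop :=
  (forall x, E x -> Rbar_le x l) /\
  (forall b, (forall x, E x -> Rbar_le x b) -> Rbar_le l b).

Definition Rbar_sup (E : Rbar -> Prop) : Rbar := epsilon (inhabits NInf) (is_lub_Rbar E).

Definition inner (X : finType) (x r : X -> R) : R := fsum (fun z => x z * r z).

Definition proper_fun (X : finType) (psi : (X -> R) -> Rbar) : Prop :=
  (forall r, psi r <> NInf) /\ (exists r, psi r <> PInf).

(* convexity = convexity of the epigraph *)
Definition convex_fun (X : finType) (psi : (X -> R) -> Rbar) : Prop :=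
  forall (x y : X -> R) (a b t : R), 0 <= t <= 1 ->
    Rbar_le (psi x) (Fin a) -> Rbar_le (psi y) (Fin b) ->
    Rbar_le (psi (fun z => t * x z + (1 - t) * y z)) (Fin (t * a + (1 - t) * b)).

(* closed = all sublevel sets are closed (lower semicontinuity) *)
Definition closed_fun (X : finType) (psi : (X -> R) -> Rbar) : Prop :=
  forall (xn : nat -> X -> R) (x : X -> R) (a : R),
    (forall z, Un_cv (fun n => xn n z) (x z)) ->
    (forall n, Rbar_le (psi (xn n)) (Fin a)) ->
    Rbar_le (psi x) (Fin a).

(* convex conjugate, sign convention adapted to rewards:
   psi^*(x) = sup_r ( - <x, r> - psi(r) ) *)
Definition conj_fun (X : finType) (psi : (X -> R) -> Rbar) (x : X -> R) : Rbar :=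
  Rbar_sup (fun v => exists r : X -> R, v = Rbar_plus (Fin (- inner x r)) (Rbar_opp (psi r))).

Section Game.
Variables (N : nat) (St : finType) (A : 'I_N -> finType).

Definition jact := {dffun forall j : 'I_N, A j}.
Definition SA : finType := (St * jact)%type.

Definition is_dist (T : finType) (p : T -> R) : Prop :=
  (forall x, 0 <= p x) /\ fsum p = 1.

Definition is_policy (T : finType) (pi : St -> T -> R) : Prop :=
  forall s, is_dist (pi s).

Definition is_kernel (P : St -> jact -> St -> R) : Prop :=
  forall s a, is_dist (P s a).

(* joint policy (pi^(i), pi^(-i)) with pi^(-i) given by the other agents' policies
   piE j, j <> i (agents act independently given the state) *)
Definition jpol (i : 'I_N) (pii : St -> A i -> R) (piE : forall j, St -> A j -> R)
  (s : St) (a : jact) : R :=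
  pii s (a i) * \big[Rmult/R1]_(j | j != i) piE j s (a j).

Fixpoint state_dist (P : St -> jact -> St -> R) (rho0 : St -> R) (pi : St -> jact -> R)
  (t : nat) (s' : St) : R :=
  match t with
  | O => rho0 s'
  | S t => fsum (fun s => fsum (fun a =>
             state_dist P rho0 pi t s * pi s a * P s a s'))
  end.

Definition expect P rho0 (gamma : R) (pi : St -> jact -> R) (f : St -> jact -> R) : R :=
  series (fun t => gamma ^ t *
    fsum (fun s => fsum (fun a => state_dist P rho0 pi t s * pi s a * f s a))).

Definition occ P rho0 (gamma : R) (pi : St -> jact -> R) (sa : SA) : R :=
  pi sa.1 sa.2 * series (fun t => gamma ^ t * state_dist P rho0 pi t sa.1).

Definition causal_entropy P rho0 gamma (i : 'I_N) (pii : St -> A i -> R)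
  (pi : St -> jact -> R) : R :=
  expect P rho0 gamma pi (fun s a => - ln (pii s (a i))).

End Game.

(* Let r_irl be the IRL reward and pi_rl = RL(r_irl) its unique RL optimum. Danskin's
   theorem, which applies because policies form a compact set on which the causal
   entropy and the expected returns are continuous, differentiates the RL value at r_irl
   with derivative E_{pi_rl}. With the convexity of psi, optimality of r_irl then yields
   psi(r_irl) - psi(r) <= E_{pi_rl}[r - r_irl] - E_{pi_E}[r - r_irl] for every r, i.e.
   r_irl attains the supremum defining psi^*(rho_{pi_rl} - rho_E), expected returns
   being inner products with occupancy measures. For any other policy pi, r_irl is only
   one candidate in that supremum, so -lam H(pi) + psi^*(rho_pi - rho_E) is at least
   -(lam H(pi) + E_pi[r_irl]) + E_{pi_E}[r_irl] - psi(r_irl), with equality at pi_rl.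
   Since pi_rl maximises lam H + E[r_irl], it minimises the primal objective, and
   uniqueness of the primal optimum concludes. *)

From HB Require Import structures.
From mathcomp Require Import all_boot zify.
From Stdlib Require Import Reals Lra Psatz ClassicalEpsilon Classical FunctionalExtensionality.
Set Implicit Arguments. Unset Strict Implicit. Unset Printing Implicit Defensive.
Open Scope R_scope.

HB.instance Definition _ := Monoid.isComLaw.Build R R0 Rplus
  (fun x y z => esym (Rplus_assoc x y z)) Rplus_comm Rplus_0_l.
HB.instance Definition _ := Monoid.isComLaw.Build R R1 Rmult
  (fun x y z => esym (Rmult_assoc x y z)) Rmult_comm Rmult_1_l.
HB.instance Definition _ := Monoid.isMulLaw.Build R R0 Rmult Rmult_0_l Rmult_0_r.
HB.instance Definition _ :=
  Monoid.isAddLaw.Build R Rmult Rplus Rmult_plus_distr_r Rmult_plus_distr_l.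

Lemma cv_const (c : R) : Un_cv (fun _ => c) c.
Proof. by move=> e e_gt0; exists 0%nat => n _; rewrite /R_dist Rminus_diag Rabs_R0. Qed.

Section FiniteSums.
Variable T : finType.
Implicit Types f g : T -> R.

Lemma fsum_ext f g : (forall x, f x = g x) -> fsum f = fsum g.
Proof. by move=> fg; apply: eq_bigr => x _. Qed.

Lemma fsumD f g : fsum (fun x => f x + g x) = fsum f + fsum g.
Proof. exact: big_split. Qed.

Lemma fsumZ c f : fsum (fun x => c * f x) = c * fsum f.
Proof. by rewrite /fsum big_distrr. Qed.

Lemma fsumB f g : fsum (fun x => f x - g x) = fsum f - fsum g.
Proof.
have -> : fsum (fun x => f x - g x) = fsum f + -1 * fsum g.
  by rewrite -fsumZ -fsumD; apply: fsum_ext => x; ring.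
ring.
Qed.

Lemma fsum_le f g : (forall x, f x <= g x) -> fsum f <= fsum g.
Proof.
move=> fg; rewrite /fsum; elim: (index_enum T) => [|y s IH].
  by rewrite !big_nil; lra.
by rewrite !big_cons; have := fg y; lra.
Qed.

Lemma fsum_ge0 f : (forall x, 0 <= f x) -> 0 <= fsum f.
Proof.
move=> f_ge0; apply: Rle_trans (fsum_le f_ge0).
by rewrite /fsum big1 //; lra.
Qed.

Lemma fsum_abs_le f : Rabs (fsum f) <= fsum (fun x => Rabs (f x)).
Proof.
rewrite /fsum; elim: (index_enum T) => [|y s IH].
  by rewrite !big_nil Rabs_R0; lra.
by rewrite !big_cons; apply: Rle_trans (Rabs_triang _ _) _; lra.
Qed.

Lemma fsum_term_le f y : (forall x, 0 <= f x) -> f y <= fsum f.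
Proof.
move=> f_ge0; rewrite /fsum (bigD1 y) //=.
have : 0 <= \big[Rplus/R0]_(x | x != y) f x.
  by apply: big_ind => [|a b|x _]; [lra | lra | exact: f_ge0].
lra.
Qed.

Lemma fsum_cv (F : nat -> T -> R) g :
  (forall x, Un_cv (fun n => F n x) (g x)) -> Un_cv (fun n => fsum (F n)) (fsum g).
Proof.
move=> Fg; rewrite /fsum; elim: (index_enum T) => [|y s IH].
  apply: (Un_cv_ext (fun _ => R0)) => [n|]; first by rewrite big_nil.
  by rewrite big_nil; exact: cv_const.
rewrite big_cons; apply: (Un_cv_ext (fun n => F n y + \big[Rplus/R0]_(x <- s) F n x)).
  by move=> n; rewrite big_cons.
exact: CV_plus.
Qed.

Lemma sum_f_R0_fsum (F : nat -> T -> R) n :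
  sum_f_R0 (fun t => fsum (F t)) n = fsum (fun x => sum_f_R0 (fun t => F t x) n).
Proof. by elim: n => [|n IH] //=; rewrite IH -fsumD. Qed.

Lemma dist_le1 (p : T -> R) x : is_dist p -> 0 <= p x <= 1.
Proof. by case=> p_ge0 <-; split; [exact: p_ge0 | exact: fsum_term_le]. Qed.

End FiniteSums.

Lemma fsum_pair (T U : finType) (F : T * U -> R) :
  fsum F = fsum (fun x => fsum (fun y => F (x, y))).
Proof. by rewrite /fsum pair_big; apply: eq_bigr => -[]. Qed.

Lemma fsum_swap (T U : finType) (F : T -> U -> R) :
  fsum (fun x => fsum (F x)) = fsum (fun y => fsum (fun x => F x y)).
Proof. exact: exchange_big. Qed.

Lemma fsum_dffun_prod (I : finType) (T_ : I -> finType) (F : forall i, T_ i -> R) :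
  fsum (fun a : {dffun forall i, T_ i} => \big[Rmult/R1]_(i : I) F i (a i)) =
  \big[Rmult/R1]_(i : I) fsum (F i).
Proof.
rewrite /fsum (reindex (@dffun_of_fprod I T_)); last exact/onW_bij/dffun_of_fprod_bij.
transitivity (\big[Rplus/R0]_(t : fprod T_) \big[Rmult/R1]_(i in I) finfun (F i) (t i)).
  by apply: eq_bigr => t _; apply: eq_bigr => i _; rewrite !ffunE.
rewrite big_fprod.
transitivity (\big[Rmult/R1]_(i : I)
  \big[Rplus/R0]_(j in tagged_with T_ i) untag R0 (finfun (F i)) j).
  by rewrite bigA_distr_big_dep.
apply: eq_bigr => i _.
transitivity (\big[Rplus/R0]_(x : T_ i) finfun (F i) x).
  by rewrite (big_tag (fun i => finfun (F i)) i).
by apply: eq_bigr => x _; rewrite ffunE.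
Qed.

Lemma inner_lin (X : finType) (x r1 r2 : X -> R) (a b : R) :
  inner x (fun z => a * r1 z + b * r2 z) = a * inner x r1 + b * inner x r2.
Proof. by rewrite /inner -!fsumZ -fsumD; apply: fsum_ext => z; ring. Qed.

Lemma Rbar_sup_lub (E : Rbar -> Prop) : is_lub_Rbar E (Rbar_sup E).
Proof.
apply: epsilon_spec.
have [EPInf|EnPInf] := classic (E PInf).
  by exists PInf; split=> [[]|b /(_ _ EPInf)] //; case: b.
have [[x0 Ex0]|EnFin] := classic (exists x, E (Fin x)).
  have [bdE|nbdE] := classic (bound (fun x => E (Fin x))).
    have [m [m_ub m_least]] := completeness _ bdE (ex_intro _ x0 Ex0).
    exists (Fin m); split=> [[x Ex|//|//]|[c c_ub|//|/(_ _ Ex0)//]] /=.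
      exact: m_ub.
    by apply: m_least => x Ex; exact: (c_ub (Fin x) Ex).
  exists PInf; split=> [[]|[c c_ub|//|/(_ _ Ex0)//]] //.
  by case: nbdE; exists c => x Ex; exact: (c_ub (Fin x) Ex).
by exists NInf; split=> [[x Ex|//|//]|] //; case: EnFin; exists x.
Qed.

Lemma Rbar_sup_ub (E : Rbar -> Prop) x : E x -> Rbar_le x (Rbar_sup E).
Proof. exact: (proj1 (Rbar_sup_lub E)). Qed.

Lemma Rbar_sup_least (E : Rbar -> Prop) b :
  (forall x, E x -> Rbar_le x b) -> Rbar_le (Rbar_sup E) b.
Proof. exact: (proj2 (Rbar_sup_lub E)). Qed.

Lemma Rbar_le_antisym_Fin (x : Rbar) (c : R) :
  Rbar_le x (Fin c) -> Rbar_le (Fin c) x -> x = Fin c.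
Proof. by case: x => //= y ? ?; f_equal; lra. Qed.

Lemma Rbar_sup_Fin (E : Rbar -> Prop) (x0 M : R) :
  E (Fin x0) -> (forall x, E x -> Rbar_le x (Fin M)) ->
  exists v, Rbar_sup E = Fin v /\ (forall d, 0 < d -> exists w, E (Fin w) /\ v - d < w).
Proof.
move=> Ex0 M_ub; have := Rbar_sup_ub Ex0; have := Rbar_sup_least M_ub.
case sup_v: (Rbar_sup E) => [v| |] //= _ _; exists v; split=> // d d_gt0; apply: NNPP => no_w.
have : Rbar_le (Rbar_sup E) (Fin (v - d)).
  apply: Rbar_sup_least => -[w Ew|EPInf|_] //=.
    by apply: Rnot_lt_le => w_gt; apply: no_w; exists w.
  by have := Rbar_sup_ub EPInf; rewrite sup_v.
by rewrite sup_v /=; lra.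
Qed.

Lemma series_eq (u : nat -> R) (l : R) :
  Un_cv (fun n => sum_f_R0 u n) l -> series u = l.
Proof.
move=> cvl; apply: (UL_sequence _ _ _ _ cvl).
exact: (epsilon_spec (inhabits R0) _ (ex_intro _ l cvl)).
Qed.

Section GeometricDomination.
Variables (g M : R) (a : nat -> R).
Hypotheses (g_bd : 0 <= g < 1) (a_bd : forall t, 0 <= a t <= g ^ t * M).

Lemma partial_sum_geom_le T k :
  sum_f_R0 a (T + k) - sum_f_R0 a T <= g ^ (S T) * M / (1 - g) * (1 - g ^ k).
Proof.
elim: k => [|k IH].
  by rewrite addn0 /= !Rminus_diag Rmult_0_r; exact: Rle_refl.
have gpow : g ^ S (T + k) = g ^ S T * g ^ k by rewrite -pow_add.
rewrite addnS /=; have := a_bd (S (T + k)); rewrite gpow.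
have -> : g ^ S T * M / (1 - g) * (1 - g * g ^ k) =
  g ^ S T * M / (1 - g) * (1 - g ^ k) + g ^ S T * g ^ k * M by field; lra.
lra.
Qed.

Lemma series_geom_dominated :
  Un_cv (fun n => sum_f_R0 a n) (series a) /\
  forall T, 0 <= series a - sum_f_R0 a T <= g ^ (S T) * M / (1 - g).
Proof.
have a_ge0 t : 0 <= a t by case: (a_bd t).
have g1 : 0 < 1 - g by lra.
have gpow_ge0 n : 0 <= g ^ n by apply: pow_le; lra.
have M_ge0 : 0 <= M by have := a_bd 0%nat; rewrite /=; lra.
have tail_bd T k : sum_f_R0 a (T + k) - sum_f_R0 a T <= g ^ (S T) * M / (1 - g).
  have := partial_sum_geom_le T k; have := gpow_ge0 k.
  have : 0 <= g ^ S T * M / (1 - g).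
    apply: Rmult_le_pos; first exact: Rmult_le_pos (gpow_ge0 _) M_ge0.
    by apply: Rlt_le; apply: Rinv_0_lt_compat.
  nra.
have [l cvl] : {l | Un_cv (fun n => sum_f_R0 a n) l}.
  apply: growing_cv => [n|]; first by rewrite /= ; have := a_ge0 (S n); lra.
  exists (a 0%nat + g * M / (1 - g)) => _ [n ->].
  by have := tail_bd 0%nat n; rewrite /= add0n Rmult_1_r; lra.
rewrite (series_eq cvl); split=> // T; split; first by have := sum_incr _ T _ cvl a_ge0; lra.
apply: (@Rle_cv_lim (fun k => sum_f_R0 a (k + T) - sum_f_R0 a T)
  (fun _ => g ^ S T * M / (1 - g))).
- by move=> k; rewrite addnC; exact: tail_bd.
- exact: CV_minus (CV_shift' _ _ _ cvl) (cv_const _).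
- exact: cv_const.
Qed.

Lemma series_geom_dominated_bd : 0 <= series a <= M / (1 - g).
Proof.
have [_ /(_ 0%nat)] := series_geom_dominated; have := a_bd 0%nat; rewrite /= !Rmult_1_r.
have -> : M / (1 - g) = M + g * M / (1 - g) by field; lra.
lra.
Qed.

End GeometricDomination.

Lemma geom_tail_lt (g M e : R) : 0 <= g < 1 -> 0 <= M -> 0 < e ->
  exists T, g ^ (S T) * M / (1 - g) < e.
Proof.
move=> g_bd M_ge0 e_gt0.
set eps := e * (1 - g) / (M + 1).
have eps_gt0 : 0 < eps by apply: Rmult_lt_0_compat; [nra | apply: Rinv_0_lt_compat; lra].
have [T gT] := pow_lt_1_zero g ltac:(rewrite Rabs_right; lra) _ eps_gt0.
exists T; have := gT (S T) (Nat.le_succ_diag_r T).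
have gST_ge0 : 0 <= g ^ S T by apply: pow_le; lra.
rewrite Rabs_right; last lra.
move=> gST; have -> : e = eps * (M + 1) / (1 - g) by rewrite /eps; field; lra.
by rewrite /Rdiv; apply: Rmult_lt_compat_r; [apply: Rinv_0_lt_compat; lra | nra].
Qed.

Lemma series_cv_dominated (g M : R) (F : nat -> nat -> R) (G : nat -> R) :
  0 <= g < 1 -> (forall n t, 0 <= F n t <= g ^ t * M) ->
  (forall t, 0 <= G t <= g ^ t * M) -> (forall t, Un_cv (fun n => F n t) (G t)) ->
  Un_cv (fun n => series (F n)) (series G).
Proof.
move=> g_bd F_bd G_bd FG e e_gt0.
have M_ge0 : 0 <= M by have := G_bd 0%nat; rewrite /=; lra.
have [T T_small] := geom_tail_lt g_bd M_ge0 (ltac:(lra) : 0 < e / 3).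
have partial_cv : Un_cv (fun n => sum_f_R0 (F n) T) (sum_f_R0 G T).
  by elim: (T) => [|k IH] //=; exact: CV_plus.
have [N0 N0_close] := partial_cv (e / 3) ltac:(lra).
exists N0 => n /N0_close; rewrite /R_dist => /Rabs_def2 [? ?].
have [_ /(_ T) tailF] := series_geom_dominated g_bd (F_bd n).
have [_ /(_ T) tailG] := series_geom_dominated g_bd G_bd.
by apply: Rabs_def1; lra.
Qed.

Lemma subseq_cv (u : nat -> R) l (phi : nat -> nat) :
  (forall n, (phi n < phi n.+1)%nat) -> Un_cv u l -> Un_cv (fun n => u (phi n)) l.
Proof.
move=> phi_incr ul e /ul [N uN]; exists N => n le_Nn; apply: uN.
suff : (n <= phi n)%nat by lia.
by elim: n {le_Nn} => [|n IH] //; have := phi_incr n; lia.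
Qed.

Lemma ValAdh_subseq (u : nat -> R) l : ValAdh u l ->
  exists phi : nat -> nat, (forall n, (phi n < phi n.+1)%nat) /\ Un_cv (fun n => u (phi n)) l.
Proof.
move=> adh.
have near_l n N : exists p, (N <= p)%nat /\ Rabs (u p - l) < RinvN n.
  have [p [/leP le_Np ?]] := adh (disc l (RinvN n)) N (ex_intro _ _ (fun y h => h)).
  by exists p.
pose pick n N := proj1_sig (constructive_indefinite_description _ (near_l n N)).
have pickP n N : (N <= pick n N)%nat /\ Rabs (u (pick n N) - l) < RinvN n.
  exact: proj2_sig (constructive_indefinite_description _ (near_l n N)).
pose fix phi n := if n is m.+1 then pick n (phi m).+1 else pick 0%nat 0%nat.
exists phi; split=> [n|e /RinvN_cv [N RN]]; first by have [] := pickP n.+1 (phi n).+1.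
exists N => n /RN; rewrite /R_dist !Rminus_0_r Rabs_right; last first.
  by apply: Rle_ge; apply: Rlt_le; apply: cond_pos.
apply: Rlt_trans; case: n => [|n]; [exact: (proj2 (pickP 0%nat 0%nat)) |].
exact: (proj2 (pickP n.+1 (phi n).+1)).
Qed.

Lemma bounded_fun_subseq_cv (X : finType) (f : nat -> X -> R) :
  (forall n x, 0 <= f n x <= 1) ->
  exists (phi : nat -> nat) (g : X -> R), (forall n, (phi n < phi n.+1)%nat) /\
    forall x, Un_cv (fun n => f (phi n) x) (g x).
Proof.
move=> f_bd.
suff [phi [g [phi_incr fg]]] : exists (phi : nat -> nat) (g : X -> R),
    (forall n, (phi n < phi n.+1)%nat) /\
    forall x, x \in enum X -> Un_cv (fun n => f (phi n) x) (g x).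
  by exists phi, g; split=> // x; apply: fg; rewrite mem_enum.
elim: (enum X) => [|y s [phi [g [phi_incr fg]]]].
  by exists (fun n => n), (fun _ => 0); split.
have [l adh_l] := @Bolzano_Weierstrass (fun n => f (phi n) y) (fun c => 0 <= c <= 1)
  (compact_P3 0 1) (fun n => f_bd (phi n) y).
have [psi [psi_incr cv_l]] := ValAdh_subseq adh_l.
have phi_mono a b : (a < b)%nat -> (phi a < phi b)%nat.
  elim: b => [|b IH] //; rewrite ltnS leq_eqVlt => /orP [/eqP ->|/IH]; first exact: phi_incr.
  by have := phi_incr b; lia.
exists (fun n => phi (psi n)), (fun x => if x == y then l else g x); split.
  by move=> n; apply: phi_mono.
move=> x; rewrite in_cons => /orP [/eqP ->|x_s]; first by rewrite eqxx.
by case: eqP => [->|_] //; exact: subseq_cv psi_incr (fg x x_s).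
Qed.

Lemma policy_subseq_cv (St T : finType) (u : nat -> St -> T -> R) :
  (forall n, is_policy (u n)) ->
  exists (phi : nat -> nat) (ub : St -> T -> R), (forall n, (phi n < phi n.+1)%nat) /\
    is_policy ub /\ forall s x, Un_cv (fun n => u (phi n) s x) (ub s x).
Proof.
move=> u_pol.
have [phi [g [phi_incr ug]]] := @bounded_fun_subseq_cv (St * T)%type
  (fun n z => u n z.1 z.2) (fun n z => dist_le1 z.2 (u_pol n z.1)).
have cv_g s x : Un_cv (fun n => u (phi n) s x) (g (s, x)) by exact: (ug (s, x)).
exists phi, (fun s x => g (s, x)); split=> //; split=> // s; split.
  move=> x; apply: (@Rle_cv_lim (fun _ => 0) (fun n => u (phi n) s x)) (cv_const 0) (cv_g s x).
  by move=> n; case: (u_pol (phi n) s).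
apply: UL_sequence (fsum_cv (cv_g s)) _.
by apply: (Un_cv_ext (fun _ => 1)) (cv_const 1) => n; case: (u_pol (phi n) s).
Qed.

Lemma ln_le_sub1 (y : R) : 0 < y -> ln y <= y - 1.
Proof. by move=> y_gt0; have := exp_ineq1_le (ln y); rewrite exp_ln //; lra. Qed.

Lemma neg_xlnx_bd (x : R) : 0 <= x <= 1 -> 0 <= x * - ln x <= 1.
Proof.
case=> x_ge0 x_le1; have [->|x_neq0] := Req_dec x 0; first by rewrite Rmult_0_l; lra.
have x_gt0 : 0 < x by lra.
have ln_le0 : ln x <= 0 by have := ln_le_sub1 x_gt0; lra.
have := ln_le_sub1 (Rinv_0_lt_compat _ x_gt0); rewrite ln_Rinv // => ln_inv.
have : x * - ln x <= x * (/ x - 1) by apply: Rmult_le_compat_l; lra.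
have -> : x * (/ x - 1) = 1 - x by field; lra.
split; nra.
Qed.

Lemma neg_xlnx_le_sqrt (x : R) : 0 <= x <= 1 -> x * - ln x <= 2 * sqrt x.
Proof.
case=> x_ge0 x_le1; have [->|x_neq0] := Req_dec x 0.
  by rewrite Rmult_0_l; have := sqrt_pos 0; lra.
have sx_gt0 : 0 < sqrt x by apply: sqrt_lt_R0; lra.
have sxx := sqrt_sqrt x x_ge0.
have ln_x : ln x = 2 * ln (sqrt x) by rewrite -{1}sxx ln_mult //; ring.
have := ln_le_sub1 (Rinv_0_lt_compat _ sx_gt0); rewrite ln_Rinv // ln_x => ln_inv.
have : x * - (2 * ln (sqrt x)) <= x * (2 * / sqrt x) by apply: Rmult_le_compat_l; lra.
by have -> : x * (2 * / sqrt x) = 2 * sqrt x by rewrite -{1}sxx; field; lra.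
Qed.

(* At 0, continuity comes from the bound - x ln x <= 2 sqrt x. *)
Lemma neg_xlnx_cv (u : nat -> R) (l : R) : (forall n, 0 <= u n <= 1) -> Un_cv u l ->
  Un_cv (fun n => u n * - ln (u n)) (l * - ln l).
Proof.
move=> u_bd ul.
have l_ge0 : 0 <= l.
  by apply: (Rle_cv_lim _ (cv_const 0) ul) => n; case: (u_bd n).
have [l0|l_neq0] := Req_dec l 0; last first.
  apply: (CV_mult _ _ _ _ ul); apply: CV_opp; apply: (continuity_seq _ _ _ _ ul).
  by apply: derivable_continuous_pt; exists (/ l); apply: derivable_pt_lim_ln; lra.
rewrite l0 Rmult_0_l => e e_gt0.
have [N uN] := ul (e * e / 4) ltac:(nra).
exists N => n /uN; rewrite /R_dist l0 !Rminus_0_r => un_small.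
have [un_ge0 un_le1] := u_bd n; rewrite Rabs_right in un_small; last lra.
have : sqrt (u n) < sqrt ((e / 2) * (e / 2)) by apply: sqrt_lt_1_alt; lra.
rewrite sqrt_square; last lra.
have := neg_xlnx_bd (u_bd n); have := neg_xlnx_le_sqrt (u_bd n).
move=> ? ? ?; rewrite Rabs_right; lra.
Qed.

Definition policy_continuous (St T : finType) (f : (St -> T -> R) -> R) : Prop :=
  forall (u : nat -> St -> T -> R) (ub : St -> T -> R),
    (forall n, is_policy (u n)) -> is_policy ub ->
    (forall s x, Un_cv (fun n => u n s x) (ub s x)) -> Un_cv (fun n => f (u n)) (f ub).

(* Danskin's lemma for a unique maximiser xs of F over the compact set of policies:
   the value sup_x (F x + t D x) has right derivative D xs at t = 0, so it cannot
   grow like F xs + t (Q + D xs) with Q > 0. *)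
Lemma danskin_unique_argmax (St T : finType) (F D : (St -> T -> R) -> R)
    (xs : St -> T -> R) (Q B : R) :
  policy_continuous F -> policy_continuous D ->
  (forall x, is_policy x -> Rabs (D x) <= B) ->
  is_policy xs -> (forall x, is_policy x -> F x <= F xs) ->
  (forall x, is_policy x -> (forall y, is_policy y -> F y <= F x) ->
     forall s a, x s a = xs s a) ->
  (forall t d, 0 < t <= 1 -> 0 < d ->
     exists x, is_policy x /\ t * (Q + D xs - D x) + (F xs - F x) < d) ->
  Q <= 0.
Proof.
move=> F_cont D_cont D_bd xs_pol xs_max xs_uniq approx_opt.
pose t n := pos (RinvN n).
have t_bd n : 0 < t n <= 1.
  split; first exact: cond_pos.
  by rewrite /t /=; rewrite -Rinv_1; apply: Rinv_le_contravar; have := pos_INR n; lra.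
have approx_ex n : exists x, is_policy x /\
    t n * (Q + D xs - D x) + (F xs - F x) < t n * t n.
  by have [? ?] := t_bd n; apply: approx_opt; nra.
have [u u_approx] := ClassicalEpsilon.choice _ approx_ex.
have u_pol n : is_policy (u n) by case: (u_approx n).
have gap_le n : Q + D xs - D (u n) <= t n.
  have [_ un_approx] := u_approx n; have := xs_max _ (u_pol n); have [? ?] := t_bd n.
  move=> F_le; apply: (Rmult_le_reg_l (t n)) => //; lra.
pose K := Rabs Q + Rabs (D xs) + B.
have F_gap_le n : F xs - F (u n) <= t n * t n + t n * K.
  have [_ un_approx] := u_approx n; have [? ?] := t_bd n.
  have : - K <= Q + D xs - D (u n).
    have := D_bd _ (u_pol n); have := Rle_abs (- Q); have := Rle_abs (- D xs).
    have := Rle_abs (D (u n)); rewrite !Rabs_Ropp /K; lra.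
  by move=> ?; nra.
have [phi [ub [phi_incr [ub_pol u_ub]]]] := policy_subseq_cv u_pol.
have t_phi : Un_cv (fun n => t (phi n)) 0 := subseq_cv phi_incr RinvN_cv.
have Fu_cv := F_cont _ _ (fun n => u_pol (phi n)) ub_pol u_ub.
have Du_cv := D_cont _ _ (fun n => u_pol (phi n)) ub_pol u_ub.
have ub_max : F xs - F ub <= 0.
  have := Rle_cv_lim (fun n => F_gap_le (phi n)) (CV_minus _ _ _ _ (cv_const _) Fu_cv)
    (CV_plus _ _ _ _ (CV_mult _ _ _ _ t_phi t_phi) (CV_mult _ _ _ _ t_phi (cv_const K))).
  lra.
have ub_xs : ub = xs.
  apply: functional_extensionality => s; apply: functional_extensionality.
  by apply: xs_uniq => // y y_pol; have := xs_max _ y_pol; lra.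
have := Rle_cv_lim (fun n => gap_le (phi n))
  (CV_minus _ _ _ _ (cv_const _) Du_cv) t_phi.
by rewrite ub_xs; lra.
Qed.

Section MarkovGame.
Variables (N : nat) (St : finType) (A : 'I_N -> finType).
Variables (P : St -> jact A -> St -> R) (rho0 : St -> R) (gamma : R).
Hypotheses (P_kernel : is_kernel P) (rho0_dist : is_dist rho0) (gamma_bd : 0 <= gamma < 1).

Implicit Types (pi : St -> jact A -> R) (f : St -> jact A -> R) (r : SA St A -> R).

Lemma state_dist_dist pi : is_policy pi -> forall t, is_dist (state_dist P rho0 pi t).
Proof.
move=> pi_pol; elim=> [|t [IH_ge0 IH_sum]] //=; split.
  move=> s'; apply: fsum_ge0 => s; apply: fsum_ge0 => a.
  apply: Rmult_le_pos; last by case: (P_kernel s a).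
  by apply: Rmult_le_pos; [exact: IH_ge0 | case: (pi_pol s)].
rewrite fsum_swap -IH_sum; apply: fsum_ext => s; rewrite fsum_swap.
transitivity (fsum (fun a => state_dist P rho0 pi t s * pi s a)).
  by apply: fsum_ext => a; rewrite fsumZ; case: (P_kernel s a) => _ ->; ring.
by rewrite fsumZ; case: (pi_pol s) => _ ->; ring.
Qed.

Definition visits pi (s : St) : R := series (fun t => gamma ^ t * state_dist P rho0 pi t s).

Lemma visits_term_bd pi s t : is_policy pi ->
  0 <= gamma ^ t * state_dist P rho0 pi t s <= gamma ^ t * 1.
Proof.
move=> pi_pol; have := dist_le1 s (state_dist_dist pi_pol t).
have : 0 <= gamma ^ t by apply: pow_le; lra.
by split; nra.
Qed.

Lemma visits_bd pi s : is_policy pi -> 0 <= visits pi s <= 1 / (1 - gamma).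
Proof. by move=> pi_pol; exact: series_geom_dominated_bd (visits_term_bd s ^~ pi_pol). Qed.

Lemma expectE pi f : is_policy pi ->
  expect P rho0 gamma pi f = fsum (fun s => fsum (fun a => pi s a * f s a * visits pi s)).
Proof.
move=> pi_pol; apply: series_eq.
apply: (Un_cv_ext (fun n => fsum (fun s => fsum (fun a =>
   pi s a * f s a * sum_f_R0 (fun t => gamma ^ t * state_dist P rho0 pi t s) n)))).
  move=> n; transitivity (sum_f_R0 (fun t => fsum (fun s => fsum (fun a =>
    pi s a * f s a * (gamma ^ t * state_dist P rho0 pi t s)))) n).
    rewrite sum_f_R0_fsum; apply: fsum_ext => s; rewrite sum_f_R0_fsum; apply: fsum_ext => a.
    by elim: n => [|n IH] /=; rewrite -?IH; ring.
  apply: sum_eq => t _; rewrite -fsumZ; apply: fsum_ext => s.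
  by rewrite -fsumZ; apply: fsum_ext => a; ring.
apply: fsum_cv => s; apply: fsum_cv => a; apply: CV_mult (cv_const _) _.
by have [] := series_geom_dominated gamma_bd (visits_term_bd s ^~ pi_pol).
Qed.

Lemma expect_occ pi r : is_policy pi ->
  expect P rho0 gamma pi (fun s a => r (s, a)) = inner (occ P rho0 gamma pi) r.
Proof.
move=> pi_pol; rewrite expectE // /inner fsum_pair.
apply: fsum_ext => s; apply: fsum_ext => a.
by rewrite /occ /= !Rmult_assoc; congr (_ * _); exact: Rmult_comm.
Qed.

Lemma occ_bd pi z : is_policy pi -> 0 <= occ P rho0 gamma pi z <= 1 / (1 - gamma).
Proof.
case: z => s a pi_pol; have := visits_bd s pi_pol; have := dist_le1 a (pi_pol s).
by rewrite /occ /visits /=; split; nra.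
Qed.

Lemma expect_abs_le pi r : is_policy pi ->
  Rabs (expect P rho0 gamma pi (fun s a => r (s, a))) <=
  1 / (1 - gamma) * fsum (fun z => Rabs (r z)).
Proof.
move=> pi_pol; rewrite expect_occ // /inner -fsumZ.
apply: Rle_trans (fsum_abs_le _) (fsum_le _) => z; rewrite Rabs_mult.
have [occ_ge0 occ_le] := occ_bd z pi_pol; rewrite (Rabs_right (occ _ _ _ _ _)); last lra.
by apply: Rmult_le_compat_r => //; exact: Rabs_pos.
Qed.

Lemma state_dist_cv (pin : nat -> St -> jact A -> R) pib :
  (forall s a, Un_cv (fun n => pin n s a) (pib s a)) ->
  forall t s, Un_cv (fun n => state_dist P rho0 (pin n) t s) (state_dist P rho0 pib t s).
Proof.
move=> pi_cv; elim=> [|t IH] s /=; first exact: cv_const.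
apply: fsum_cv => s0; apply: fsum_cv => a.
by apply: CV_mult (cv_const _); exact: CV_mult.
Qed.

Lemma visits_cv (pin : nat -> St -> jact A -> R) pib :
  (forall n, is_policy (pin n)) -> is_policy pib ->
  (forall s a, Un_cv (fun n => pin n s a) (pib s a)) ->
  forall s, Un_cv (fun n => visits (pin n) s) (visits pib s).
Proof.
move=> pin_pol pib_pol pi_cv s.
apply: (series_cv_dominated gamma_bd (fun n t => visits_term_bd s t (pin_pol n))
  (visits_term_bd s ^~ pib_pol)) => t.
exact: CV_mult (cv_const _) (state_dist_cv pi_cv t s).
Qed.

(* The integrand is only required to converge after weighting by the policy, which
   is what makes the causal entropy (with its - ln pi) continuous. *)
Lemma expect_cv (pin : nat -> St -> jact A -> R) pib (fn : nat -> St -> jact A -> R) fb :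
  (forall n, is_policy (pin n)) -> is_policy pib ->
  (forall s a, Un_cv (fun n => pin n s a) (pib s a)) ->
  (forall s a, Un_cv (fun n => pin n s a * fn n s a) (pib s a * fb s a)) ->
  Un_cv (fun n => expect P rho0 gamma (pin n) (fn n)) (expect P rho0 gamma pib fb).
Proof.
move=> pin_pol pib_pol pi_cv pif_cv; rewrite expectE //.
apply: (Un_cv_ext (fun n => fsum (fun s => fsum (fun a =>
  pin n s a * fn n s a * visits (pin n) s)))) => [n|]; first by rewrite expectE.
apply: fsum_cv => s; apply: fsum_cv => a.
exact: CV_mult (pif_cv s a) (visits_cv pin_pol pib_pol pi_cv s).
Qed.

End MarkovGame.

Section Conjugate.
Variables (X : finType) (psi : (X -> R) -> Rbar) (x : X -> R).

Lemma conj_fun_ge r p : psi r = Fin p -> Rbar_le (Fin (- inner x r - p)) (conj_fun psi x).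
Proof. by move=> psi_r; apply: Rbar_sup_ub; exists r; rewrite psi_r. Qed.

Lemma conj_fun_le_Fin c : (forall r, psi r <> NInf) ->
  (forall r p, psi r = Fin p -> - inner x r - p <= c) -> Rbar_le (conj_fun psi x) (Fin c).
Proof.
move=> psi_nNInf le_c; apply: Rbar_sup_least => _ [r ->].
by case psi_r: (psi r) (le_c r) (psi_nNInf r) => [p| |] //= /(_ p erefl).
Qed.

End Conjugate.

Section AgentPolicy.
Variables (N : nat) (St : finType) (A : 'I_N -> finType).
Variables (P : St -> jact A -> St -> R) (rho0 : St -> R) (gamma : R).
Variables (piE : forall j : 'I_N, St -> A j -> R) (i : 'I_N).
(* Under Set Implicit Arguments, j would be implicit in the section variable piE. *)
Arguments piE : clear implicits.
Hypotheses (P_kernel : is_kernel P) (rho0_dist : is_dist rho0) (gamma_bd : 0 <= gamma < 1).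
Hypothesis piE_pol : forall j : 'I_N, is_policy (piE j).

Implicit Types (pii : St -> A i -> R) (r : SA St A -> R).

Lemma others_bd (s : St) (a : jact A) :
  0 <= \big[Rmult/R1]_(j | j != i) piE j s (a j) <= 1.
Proof.
apply: (big_ind (fun x => 0 <= x <= 1)); [lra | move=> x y ? ?; nra |].
by move=> j _; exact: dist_le1 (piE_pol j s).
Qed.

Lemma jpol_policy pii : is_policy pii -> is_policy (jpol pii piE).
Proof.
move=> pii_pol s; split=> [a|].
  by apply: Rmult_le_pos; [case: (pii_pol s) | case: (others_bd s a)].
pose G := dfwith (fun j => piE j s) (pii s).
have jpolE a : jpol pii piE s a = \big[Rmult/R1]_j G j (a j).
  rewrite /jpol [RHS](bigD1 i) //= /G dfwith_in; congr Rmult.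
  by apply: eq_bigr => j ji; rewrite dfwith_out // eq_sym.
rewrite (fsum_ext jpolE) fsum_dffun_prod (bigD1 i) //= big1 => [|j ji].
  by rewrite /G dfwith_in; case: (pii_pol s) => _ ->; ring.
by rewrite /G dfwith_out 1?eq_sym //; case: (piE_pol j s).
Qed.

Lemma jpol_neg_ln pii s (a : jact A) : jpol pii piE s a * - ln (pii s (a i)) =
  pii s (a i) * - ln (pii s (a i)) * \big[Rmult/R1]_(j | j != i) piE j s (a j).
Proof. by rewrite /jpol !Rmult_assoc [_ * - ln _]Rmult_comm. Qed.

Definition agent_entropy pii := causal_entropy P rho0 gamma pii (jpol pii piE).

Definition agent_return pii r := expect P rho0 gamma (jpol pii piE) (fun s a => r (s, a)).

Lemma agent_entropy_bd pii : is_policy pii ->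
  agent_entropy pii <= fsum (fun s : St => fsum (fun a : jact A => 1 / (1 - gamma))).
Proof.
move=> pii_pol; rewrite /agent_entropy /causal_entropy expectE //; last exact: jpol_policy.
apply: fsum_le => s; apply: fsum_le => a.
have [v_ge0 v_le] := visits_bd P_kernel rho0_dist gamma_bd s (jpol_policy pii_pol).
have [o_ge0 o_le1] := others_bd s a.
have [h_ge0 h_le1] := neg_xlnx_bd (dist_le1 (a i) (pii_pol s)).
rewrite jpol_neg_ln.
apply: (Rle_trans _ (1 * visits P rho0 gamma (jpol pii piE) s)); last lra.
apply: Rmult_le_compat_r => //; rewrite -(Rmult_1_l 1).
exact: Rmult_le_compat h_ge0 o_ge0 h_le1 o_le1.
Qed.

Lemma agent_return_abs_le pii r : is_policy pii ->
  Rabs (agent_return pii r) <= 1 / (1 - gamma) * fsum (fun z => Rabs (r z)).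
Proof. by move=> pii_pol; apply: expect_abs_le => //; exact: jpol_policy. Qed.

Lemma jpol_cv (u : nat -> St -> A i -> R) ub :
  (forall s x, Un_cv (fun n => u n s x) (ub s x)) ->
  forall s a, Un_cv (fun n => jpol (u n) piE s a) (jpol ub piE s a).
Proof. by move=> u_cv s a; exact: CV_mult (u_cv _ _) (cv_const _). Qed.

Lemma agent_entropy_continuous : policy_continuous agent_entropy.
Proof.
move=> u ub u_pol ub_pol u_cv; apply: expect_cv => //.
- by move=> n; exact: jpol_policy.
- exact: jpol_policy.
- exact: jpol_cv.
move=> s a; rewrite jpol_neg_ln.
apply: (Un_cv_ext (fun n => u n s (a i) * - ln (u n s (a i)) *
  \big[Rmult/R1]_(j | j != i) piE j s (a j))) => [n|]; first by rewrite jpol_neg_ln.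
apply: CV_mult (cv_const _).
by apply: neg_xlnx_cv (u_cv s (a i)) => n; exact: dist_le1 (u_pol n s).
Qed.

Lemma agent_return_continuous r : policy_continuous (agent_return ^~ r).
Proof.
move=> u ub u_pol ub_pol u_cv; apply: expect_cv => //.
- by move=> n; exact: jpol_policy.
- exact: jpol_policy.
- exact: jpol_cv.
by move=> s a; exact: CV_mult (jpol_cv u_cv s a) (cv_const _).
Qed.

Lemma agent_return_occ pii r : is_policy pii ->
  agent_return pii r = inner (occ P rho0 gamma (jpol pii piE)) r.
Proof. by move=> pii_pol; apply: expect_occ => //; exact: jpol_policy. Qed.

Lemma agent_return_convex_comb pii r1 r2 t : is_policy pii ->
  agent_return pii (fun z => t * r1 z + (1 - t) * r2 z) =
  t * agent_return pii r1 + (1 - t) * agent_return pii r2.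
Proof. by move=> pii_pol; rewrite !agent_return_occ // inner_lin. Qed.

Definition occ_gap pii (sa : SA St A) : R :=
  occ P rho0 gamma (jpol pii piE) sa - occ P rho0 gamma (jpol (piE i) piE) sa.

Lemma inner_occ_gap pii r : is_policy pii ->
  inner (occ_gap pii) r = agent_return pii r - agent_return (piE i) r.
Proof.
move=> pii_pol; rewrite !agent_return_occ // /inner -fsumB.
by apply: fsum_ext => z; rewrite /occ_gap; ring.
Qed.

Section InverseRL.
Variables (lam : R) (psi : (SA St A -> R) -> Rbar).
Hypotheses (lam_ge0 : 0 <= lam) (psi_proper : proper_fun psi) (psi_convex : convex_fun psi).

Definition rl_obj r pii := lam * agent_entropy pii + agent_return pii r.

Definition rl_val r := Rbar_sup (fun v => exists pii, is_policy pii /\ v = Fin (rl_obj r pii)).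

Definition irl_obj r := Rbar_plus (Rbar_plus (Rbar_opp (psi r)) (Rbar_opp (rl_val r)))
  (Fin (agent_return (piE i) r)).

Definition primal_obj pii :=
  Rbar_plus (Fin (- lam * agent_entropy pii)) (conj_fun psi (occ_gap pii)).

Lemma rl_val_Fin r : exists v, rl_val r = Fin v /\
  (forall d, 0 < d -> exists pii, is_policy pii /\ v - d < rl_obj r pii).
Proof.
pose M := lam * fsum (fun s : St => fsum (fun a : jact A => 1 / (1 - gamma))) +
  1 / (1 - gamma) * fsum (fun z => Rabs (r z)).
have M_ub pii : is_policy pii -> rl_obj r pii <= M.
  move=> pii_pol; have := agent_return_abs_le r pii_pol.
  have := Rmult_le_compat_l _ _ _ lam_ge0 (agent_entropy_bd pii_pol).
  have := Rle_abs (agent_return pii r); rewrite /rl_obj /M; lra.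
have M_bd v : (exists pii, is_policy pii /\ v = Fin (rl_obj r pii)) -> Rbar_le v (Fin M).
  by move=> [pii [pii_pol ->]]; exact: M_ub.
have [v [val_v approx]] := Rbar_sup_Fin (ex_intro _ (piE i) (conj (piE_pol i) erefl)) M_bd.
exists v; split=> // d /approx [w [[pii [pii_pol [->]]]]].
by exists pii.
Qed.

Lemma rl_val_argmax r pist : is_policy pist ->
  (forall pii, is_policy pii -> rl_obj r pii <= rl_obj r pist) ->
  rl_val r = Fin (rl_obj r pist).
Proof.
move=> pist_pol pist_max; apply: Rbar_le_antisym_Fin.
  by apply: Rbar_sup_least => _ [pii [pii_pol ->]]; exact: pist_max.
by apply: Rbar_sup_ub; exists pist.
Qed.

Lemma rl_obj_continuous r : policy_continuous (rl_obj r).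
Proof.
move=> u ub u_pol ub_pol u_cv; apply: CV_plus.
  exact: CV_mult (cv_const _) (agent_entropy_continuous u_pol ub_pol u_cv).
exact: agent_return_continuous.
Qed.

Section IRLOptimum.
Variables (r_irl : SA St A -> R) (pi_rl : St -> A i -> R).
Hypotheses (irl_max : forall r, Rbar_le (irl_obj r) (irl_obj r_irl))
  (rl_pol : is_policy pi_rl)
  (rl_max : forall pii, is_policy pii -> rl_obj r_irl pii <= rl_obj r_irl pi_rl)
  (rl_uniq : forall pii, is_policy pii ->
     (forall pii', is_policy pii' -> rl_obj r_irl pii' <= rl_obj r_irl pii) ->
     forall s a, pii s a = pi_rl s a).

Lemma psi_Fin_irl : exists p, psi r_irl = Fin p.
Proof.
case psi_irl: (psi r_irl) => [p| |]; first by exists p.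
  have [r0] := proj2 psi_proper; have [v0 [val0 _]] := rl_val_Fin r0.
  have := irl_max r0; rewrite /irl_obj val0 psi_irl.
  by case: (psi r0) (proj1 psi_proper r0).
by have := proj1 psi_proper r_irl.
Qed.

(* First-order optimality of r_irl in the direction r - r_irl; the derivative of
   rl_val at r_irl is the return of its unique maximiser pi_rl (Danskin). *)
Lemma irl_first_order r p_irl p : psi r_irl = Fin p_irl -> psi r = Fin p ->
  p_irl - p + (agent_return (piE i) r - agent_return (piE i) r_irl)
    - (agent_return pi_rl r - agent_return pi_rl r_irl) <= 0.
Proof.
move=> psi_irl psi_r.
pose D pii := agent_return pii r - agent_return pii r_irl.
pose B := 1 / (1 - gamma) * fsum (fun z => Rabs (r z)) +
  1 / (1 - gamma) * fsum (fun z => Rabs (r_irl z)).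
apply: (@danskin_unique_argmax _ _ (rl_obj r_irl) D pi_rl _ B) => //.
- exact: rl_obj_continuous.
- move=> u ub u_pol ub_pol u_cv.
  exact: CV_minus (agent_return_continuous r u_pol ub_pol u_cv)
    (agent_return_continuous r_irl u_pol ub_pol u_cv).
- move=> pii pii_pol; rewrite /D /B; apply: Rle_trans (Rabs_triang _ _) _.
  rewrite Rabs_Ropp.
  by have := agent_return_abs_le r pii_pol; have := agent_return_abs_le r_irl pii_pol; lra.
move=> t d [t_gt0 t_le1] d_gt0.
pose rt z := t * r z + (1 - t) * r_irl z.
have [pt [psi_rt pt_le]] : exists pt, psi rt = Fin pt /\ pt <= t * p + (1 - t) * p_irl.
  have psi_r_le : Rbar_le (psi r) (Fin p) by rewrite psi_r /=; lra.
  have psi_irl_le : Rbar_le (psi r_irl) (Fin p_irl) by rewrite psi_irl /=; lra.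
  have := psi_convex (conj (Rlt_le _ _ t_gt0) t_le1) psi_r_le psi_irl_le.
  rewrite -/rt; case psi_rt: (psi rt) (proj1 psi_proper rt) => [pt| |] //= _ pt_le.
  by exists pt.
have [vt [val_t /(_ d d_gt0) [pii [pii_pol vt_lt]]]] := rl_val_Fin rt.
exists pii; split=> //.
have := irl_max rt; rewrite /irl_obj psi_rt val_t psi_irl (rl_val_argmax rl_pol rl_max) /=.
move: vt_lt; rewrite /rl_obj /D !agent_return_convex_comb //.
by have := rl_max pii_pol; rewrite /rl_obj; nra.
Qed.

Lemma conj_occ_gap_rl p_irl : psi r_irl = Fin p_irl ->
  conj_fun psi (occ_gap pi_rl) =
  Fin (- (agent_return pi_rl r_irl - agent_return (piE i) r_irl) - p_irl).
Proof.
move=> psi_irl; apply: Rbar_le_antisym_Fin.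
  apply: conj_fun_le_Fin (proj1 psi_proper) _ => r p psi_r.
  by rewrite inner_occ_gap //; have := irl_first_order psi_irl psi_r; lra.
by rewrite -inner_occ_gap //; exact: conj_fun_ge.
Qed.

Lemma rl_argmin_primal pii : is_policy pii -> Rbar_le (primal_obj pi_rl) (primal_obj pii).
Proof.
move=> pii_pol; have [p_irl psi_irl] := psi_Fin_irl.
rewrite /primal_obj (conj_occ_gap_rl psi_irl).
have := conj_fun_ge (occ_gap pii) psi_irl; rewrite inner_occ_gap //.
case: (conj_fun psi (occ_gap pii)) => [c| |] //= c_ge.
by have := rl_max pii_pol; rewrite /rl_obj; lra.
Qed.

End IRLOptimum.
End InverseRL.
End AgentPolicy.

Theorem proposition1
  (N : nat) (St : finType) (A : 'I_N -> finType)
  (P : St -> jact A -> St -> R) (rho0 : St -> R) (gamma : R)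
  (piE : forall j : 'I_N, St -> A j -> R)
  (i : 'I_N) (lam : R) (psi : (SA St A -> R) -> Rbar) :
  is_kernel P -> is_dist rho0 -> 0 <= gamma < 1 ->
  (forall j, is_policy (piE j)) ->
  0 < lam ->
  proper_fun psi -> convex_fun psi -> closed_fun psi ->
  let Hent (pii : St -> A i -> R) :=
    causal_entropy P rho0 gamma pii (jpol pii piE) in
  let Eexp (pii : St -> A i -> R) (r : SA St A -> R) :=
    expect P rho0 gamma (jpol pii piE) (fun s a => r (s, a)) in
  let rl_obj (r : SA St A -> R) (pii : St -> A i -> R) := lam * Hent pii + Eexp pii r in
  let rl_val (r : SA St A -> R) :=
    Rbar_sup (fun v => exists pii, is_policy pii /\ v = Fin (rl_obj r pii)) in
  let irl_obj (r : SA St A -> R) :=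
    Rbar_plus (Rbar_plus (Rbar_opp (psi r)) (Rbar_opp (rl_val r)))
              (Fin (Eexp (piE i) r)) in
  let primal_obj (pii : St -> A i -> R) :=
    Rbar_plus (Fin (- lam * Hent pii))
      (conj_fun psi (fun sa => occ P rho0 gamma (jpol pii piE) sa
                               - occ P rho0 gamma (jpol (piE i) piE) sa)) in
  forall (r_irl : SA St A -> R) (pi_rl pi_primal : St -> A i -> R),
    (forall r, Rbar_le (irl_obj r) (irl_obj r_irl)) ->
    (forall r, (forall r', Rbar_le (irl_obj r') (irl_obj r)) -> r = r_irl) ->
    is_policy pi_rl ->
    (forall pii, is_policy pii -> rl_obj r_irl pii <= rl_obj r_irl pi_rl) ->
    (forall pii, is_policy pii ->
       (forall pii', is_policy pii' -> rl_obj r_irl pii' <= rl_obj r_irl pii) ->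
       forall s a, pii s a = pi_rl s a) ->
    is_policy pi_primal ->
    (forall pii, is_policy pii -> Rbar_le (primal_obj pi_primal) (primal_obj pii)) ->
    (forall pii, is_policy pii ->
       (forall pii', is_policy pii' -> Rbar_le (primal_obj pii) (primal_obj pii')) ->
       forall s a, pii s a = pi_primal s a) ->
    forall s a, pi_rl s a = pi_primal s a.
Proof.
move=> P_kernel rho0_dist gamma_bd piE_pol lam_gt0 psi_proper psi_convex _.
move=> Hent Eexp rl_obj rl_val irl_obj primal_obj.
move=> r_irl pi_rl pi_primal irl_max _ rl_pol rl_max rl_uniq _ _ primal_uniq.
apply: (primal_uniq _ rl_pol).
exact: (rl_argmin_primal P_kernel rho0_dist gamma_bd piE_pol (Rlt_le _ _ lam_gt0)
  psi_proper psi_convex irl_max rl_pol rl_max rl_uniq).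
Qed.
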